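(* Let $n\ge4$, let $C=\mathrm{circ}(1,0,\ldots,0,-1)$ of order $n-1$, and let $X=(CC^T+I_{n-1})^{-1}(J_{n-1}-nI_{n-1})$. Then $X=\mathrm{circ}(b_0,b_1,\ldots,b_{n-2})$ where, for $j=0,1,\ldots,n-2$, \[b_j=1+\frac{n2^{n-1-j}}{\sqrt{5}}\left[\frac{(3+\sqrt{5})^j}{2^{n-1}-(3+\sqrt{5})^{n-1}}-\frac{(3-\sqrt{5})^j}{2^{n-1}-(3-\sqrt{5})^{n-1}}\right].\]
   Context: For $c_0,\dots,c_{k-1}$, $\mathrm{circ}(c_0,\ldots,c_{k-1})$ denotes the $k\times k$ circulant matrix whose $(i,j)$-entry is $c_{(j-i)\bmod k}$. $J_{n-1}$ is the $(n-1)\times(n-1)$ all-ones matrix and $I_{n-1}$ the identity. Note $CC^T+I_{n-1}=\mathrm{circ}(3,-1,0,\ldots,0,-1)$, which is invertible. ($X$ is a block of the Moore–Penrose inverse of the oriented incidence matrix of the wheel graph $W_n$.) *)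

From mathcomp Require Import all_boot all_order all_algebra.
Set Implicit Arguments. Unset Strict Implicit. Unset Printing Implicit Defensive.
Import GRing.Theory Num.Theory.
Local Open Scope ring_scope.

Definition circ (R : Type) (k : nat) (c : nat -> R) : 'M[R]_k :=
  \matrix_(i < k, j < k) c ((j + k - i) %% k)%N.

From mathcomp Require Import all_boot all_order all_algebra.
From mathcomp Require Import zify ring lra.
Set Implicit Arguments.
Unset Strict Implicit.
Import Order.TTheory GRing.Theory Num.Theory.
Local Open Scope ring_scope.

(* With the cyclic shift S we have C = 1 - S and S S^T = 1, so C C^T + 1 = 3 - S - S^T.
   A circulant circ g is a right inverse of t - S - S^T exactly when g solves the
   cyclic recurrence t g_d - g_(d+1) - g_(d-1) = [d = 0]; if a b = 1 and a + b = t,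
   this recurrence is solved by g_d = (b^d / (1 - b^k) - a^d / (1 - a^k)) / (a - b).
   Since 3 - S - S^T fixes the all-ones matrix J, so does its inverse, hence
   X = J - n circ g, and for a, b = (3 +- sqrt 5) / 2 the entries 1 - n g_j are the b_j. *)

Lemma modn_double (k x : nat) :
  (x < 2 * k)%N -> (x < k)%N /\ (x %% k = x)%N \/ (k <= x)%N /\ (x %% k = x - k)%N.
Proof.
case: (ltnP x k) => [ltxk _ | lekx ltx2k]; first by left; rewrite modn_small.
right; split=> //; rewrite -[in LHS](subnK lekx) modnDr modn_small //; lia.
Qed.

(* Replaces each innermost [x %% k] by a fresh variable together with its two
   possible values (provided lia shows x < 2k), so that lia can finish. *)
Ltac case_modn k := repeat match goal with |- context [(?x %% k)%N] =>
  lazymatch x with context [(_ %% k)%N] => fail | _ =>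
    have := @modn_double k x ltac:(lia); generalize (x %% k)%N; intros ? ? end end.

Section CircIndex.
Variables (k : nat) (i j : 'I_k).

Lemma circ_index_ord_pred :
  ((j + k - ord_pred i) %% k = ((j + k - i) %% k).+1 %% k)%N.
Proof. have ltik := ltn_ord i; have ltjk := ltn_ord j; rewrite /=; case_modn k; lia. Qed.

Lemma circ_index_ordS :
  ((j + k - ordS i) %% k = ((j + k - i) %% k + k.-1) %% k)%N.
Proof. have ltik := ltn_ord i; have ltjk := ltn_ord j; rewrite /=; case_modn k; lia. Qed.

Lemma circ_index_eq0 : (((j + k - i) %% k)%N == 0%N) = (i == j).
Proof.
have ltik := ltn_ord i; have ltjk := ltn_ord j.
by rewrite -[i == j]/(i == j :> nat); apply/eqP/eqP; case_modn k; lia.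
Qed.

Lemma circ_index_lt : ((j + k - i) %% k < k)%N.
Proof. by rewrite ltn_pmod // (leq_ltn_trans _ (ltn_ord i)). Qed.

End CircIndex.

Section Circulant.
Variables (R : pzRingType) (k : nat).
Implicit Types (c : nat -> R) (t : R).

Definition shift_mx : 'M[R]_k := \matrix_(i, j) (j == ord_pred i)%:R.

Definition cyclic_tridiag t : 'M[R]_k := t%:M - shift_mx - shift_mx^T.

Lemma mul_shift_mx m (A : 'M[R]_(k, m)) :
  shift_mx *m A = \matrix_(i, j) A (ord_pred i) j.
Proof.
apply/matrixP => i j; rewrite !mxE (bigD1 (ord_pred i)) //= mxE eqxx mul1r.
by rewrite big1 ?addr0 // => l /negbTE nl; rewrite mxE nl mul0r.
Qed.

Lemma mul_tr_shift_mx m (A : 'M[R]_(k, m)) :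
  shift_mx^T *m A = \matrix_(i, j) A (ordS i) j.
Proof.
apply/matrixP => i j; rewrite !mxE (bigD1 (ordS i)) //= !mxE ordSK eqxx mul1r.
rewrite big1 ?addr0 // => l nl; rewrite !mxE.
by rewrite -{1}(ordSK i) (inj_eq (@ord_pred_inj k)) eq_sym (negbTE nl) mul0r.
Qed.

Lemma shift_mx_tr : shift_mx *m shift_mx^T = 1%:M.
Proof.
apply/matrixP => i j; rewrite mul_shift_mx !mxE.
by rewrite (inj_eq (@ord_pred_inj k)) eq_sym.
Qed.

Lemma eq_circ c1 c2 :
  (forall d, (d < k)%N -> c1 d = c2 d) -> circ k c1 = circ k c2.
Proof. by move=> eq_c; apply/matrixP => i j; rewrite !mxE eq_c ?circ_index_lt. Qed.

Lemma circ_delta0 : circ k (fun d => (d == 0%N)%:R : R) = 1%:M.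
Proof. by apply/matrixP => i j; rewrite !mxE circ_index_eq0. Qed.

Lemma circ_const (a : R) : circ k (fun=> a) = const_mx a.
Proof. by apply/matrixP => i j; rewrite !mxE. Qed.

Lemma circZ a c : circ k (fun d => a * c d) = a *: circ k c.
Proof. by apply/matrixP => i j; rewrite !mxE. Qed.

Lemma circB c1 c2 : circ k (fun d => c1 d - c2 d) = circ k c1 - circ k c2.
Proof. by apply/matrixP => i j; rewrite !mxE. Qed.

Lemma shift_mx_circ c : shift_mx *m circ k c = circ k (fun d => c (d.+1 %% k)%N).
Proof. by apply/matrixP => i j; rewrite mul_shift_mx !mxE circ_index_ord_pred. Qed.

Lemma tr_shift_mx_circ c :
  shift_mx^T *m circ k c = circ k (fun d => c ((d + k.-1) %% k)%N).
Proof. by apply/matrixP => i j; rewrite mul_tr_shift_mx !mxE circ_index_ordS. Qed.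

Lemma circ_delta_last : circ k (fun d => (d == k.-1)%:R : R) = shift_mx.
Proof.
rewrite -[RHS]mulmx1 -circ_delta0 shift_mx_circ; apply: eq_circ => d ltdk.
by congr (_%:R); apply/eqP/eqP; case_modn k; lia.
Qed.

Lemma cyclic_tridiag_circ t c :
  cyclic_tridiag t *m circ k c
  = circ k (fun d => t * c d - c (d.+1 %% k)%N - c ((d + k.-1) %% k)%N).
Proof.
rewrite !mulmxBl mul_scalar_mx shift_mx_circ tr_shift_mx_circ.
by apply/matrixP => i j; rewrite !mxE.
Qed.

Lemma circ_one_sub_shift : (1 < k)%N ->
  circ k (fun d => if d == 0%N then 1 else if d == k.-1 then -1 else 0)
  = 1%:M - shift_mx.
Proof.
move=> lt1k; rewrite -circ_delta0 -circ_delta_last -circB.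
apply: eq_circ => d _; case: eqP => [->|_] /=.
  by rewrite eq_sym gtn_eqF ?subr0 // -subn1 subn_gt0.
by case: eqP; rewrite sub0r ?oppr0.
Qed.

Lemma one_sub_shift_gram :
  (1%:M - shift_mx) *m (1%:M - shift_mx)^T + 1%:M = cyclic_tridiag 3.
Proof.
rewrite linearB /= trmx1 mulmxBl !mulmxBr !mul1mx !mulmx1 shift_mx_tr /cyclic_tridiag.
have -> : 3%:M = 1%:M + 1%:M + 1%:M :> 'M[R]_k.
  by rewrite -!raddfD /= -mulr2n natr1.
by rewrite opprB addrACA [LHS]addrAC -[RHS]addrA [- shift_mx - _]addrC.
Qed.

End Circulant.

Lemma invmx_right (R : comUnitRingType) k (A B : 'M[R]_k) :
  A *m B = 1%:M -> invmx A = B.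
Proof.
move=> AB1; have [A_unit _] := mulmx1_unit AB1.
by rewrite -[invmx _]mulmx1 -AB1 mulmxA mulVmx // mul1mx.
Qed.

Lemma mulmx_right_inverse_fixed (R : comPzRingType) k m (A B : 'M[R]_k) (v : 'M_(k, m)) :
  A *m B = 1%:M -> A *m v = v -> B *m v = v.
Proof. by move=> AB1 Av; rewrite -{1}Av mulmxA (mulmx1C AB1) mul1mx. Qed.

Section CyclicGreen.
Variables (F : fieldType) (k : nat) (a b : F).
Hypotheses (lt1k : (1 < k)%N) (ab1 : a * b = 1) (neq_ab : a != b).
Hypotheses (ak_neq1 : a ^+ k != 1) (bk_neq1 : b ^+ k != 1).

Definition cyclic_green (d : nat) : F :=
  (b ^+ d / (1 - b ^+ k) - a ^+ d / (1 - a ^+ k)) / (a - b).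

Local Notation g := cyclic_green.

Let subr_ab_neq0 : a - b != 0. Proof. by rewrite subr_eq0. Qed.
Let one_sub_ak : 1 - a ^+ k != 0. Proof. by rewrite subr_eq0 eq_sym. Qed.
Let one_sub_bk : 1 - b ^+ k != 0. Proof. by rewrite subr_eq0 eq_sym. Qed.

(* a and b are the roots of x^2 - (a + b) x + a b, so the left side is a
   multiple of a b - 1. *)
Lemma cyclic_green_recS e : (a + b) * g e.+1 - g e.+2 - g e = 0.
Proof.
have -> : (a + b) * g e.+1 - g e.+2 - g e = (a * b - 1) * g e.
  by rewrite /g !exprS; field; rewrite subr_ab_neq0 one_sub_ak one_sub_bk.
by rewrite ab1 subrr mul0r.
Qed.

Lemma cyclic_green_last : g k = g 0.
Proof.
by rewrite /g expr0; field; rewrite subr_ab_neq0 one_sub_ak one_sub_bk.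
Qed.

Lemma cyclic_green_first : (a + b) * g 0 - g 1 - g k.-1 = 1.
Proof.
have ek : k = k.-1.+1 by rewrite prednK // ltnW.
have fa : b - a ^+ k.-1 = b * (1 - a ^+ k).
  by rewrite {2}ek exprSr mulrBr mulr1 mulrCA (mulrC b) ab1 mulr1.
have fb : a - b ^+ k.-1 = a * (1 - b ^+ k).
  by rewrite {2}ek exprSr mulrBr mulr1 mulrCA ab1 mulr1.
transitivity (((a - b ^+ k.-1) / (1 - b ^+ k) - (b - a ^+ k.-1) / (1 - a ^+ k)) / (a - b)).
  by rewrite /g expr0 expr1; ring.
by rewrite fa fb !mulfK // divff.
Qed.

Lemma cyclic_green_rec d : (d < k)%N ->
  (a + b) * g d - g (d.+1 %% k)%N - g ((d + k.-1) %% k)%N = (d == 0%N)%:R.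
Proof.
case: d => [_ | e ltek].
  by rewrite add0n !modn_small ?cyclic_green_first // ltn_predL ltnW.
have -> : ((e.+1 + k.-1) %% k = e)%N.
  by rewrite addSnnS prednK ?(ltnW lt1k) // modnDr modn_small // ltnW.
have [ek | ltek2] := eqVneq e.+2 k.
  by rewrite -{1}ek modnn -cyclic_green_last -ek cyclic_green_recS.
by rewrite modn_small ?cyclic_green_recS // ltn_neqAle ltek2.
Qed.

Lemma cyclic_tridiag_green : cyclic_tridiag k (a + b) *m circ k g = 1%:M.
Proof.
by rewrite cyclic_tridiag_circ -circ_delta0; apply: eq_circ; exact: cyclic_green_rec.
Qed.

End CyclicGreen.

Lemma expr_scaled_ratio (F : fieldType) (c x : F) (k d : nat) :
  c != 0 -> x ^+ k != 1 -> (d <= k)%N ->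
  c ^+ (k - d) * (c * x) ^+ d / (c ^+ k - (c * x) ^+ k) = x ^+ d / (1 - x ^+ k).
Proof.
move=> c_neq0 xk_neq1 ledk; rewrite !exprMn.
have one_sub_xk : 1 - x ^+ k != 0 by rewrite subr_eq0 eq_sym.
have -> : c ^+ k = c ^+ (k - d) * c ^+ d by rewrite -exprD subnK.
field; rewrite one_sub_xk -[X in X - _]mulr1 -mulrBr.
by rewrite !mulf_neq0 ?expf_neq0.
Qed.

Section SqrtFive.
Variable R : rcfType.
Local Notation s5 := (Num.sqrt (5 : R)).
Local Notation root_hi := ((3 + s5) / 2).
Local Notation root_lo := ((3 - s5) / 2).

Lemma sqr_sqrt5 : s5 ^+ 2 = 5.
Proof. by rewrite sqr_sqrtr // ler0n. Qed.

Lemma sqrt5_gt1 : 1 < s5.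
Proof. have := sqr_sqrt5; have := sqrtr_ge0 (5 : R); nra. Qed.

Lemma sqrt5_lt3 : s5 < 3.
Proof. have := sqr_sqrt5; have := sqrt5_gt1; nra. Qed.

Lemma root_mul : root_hi * root_lo = 1.
Proof. have := sqr_sqrt5; lra. Qed.

Lemma root_add : root_hi + root_lo = 3.
Proof. lra. Qed.

Lemma root_sub : root_hi - root_lo = s5.
Proof. lra. Qed.

Lemma root_neq : root_hi != root_lo.
Proof. by rewrite -subr_eq0 root_sub; have := sqrt5_gt1; lra. Qed.

Lemma expr_root_hi_neq1 k : (0 < k)%N -> root_hi ^+ k != 1.
Proof.
move=> k_gt0; have hi_gt1 : 1 < root_hi by have := sqrt5_gt1; lra.
by rewrite gt_eqF // exprn_egt1 // -lt0n.
Qed.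

Lemma expr_root_lo_neq1 k : (0 < k)%N -> root_lo ^+ k != 1.
Proof.
move=> k_gt0; have lo_ge0 : 0 <= root_lo by have := sqrt5_lt3; lra.
have lo_lt1 : root_lo < 1 by have := sqrt5_gt1; lra.
by rewrite lt_eqF // exprn_ilt1 // -lt0n.
Qed.

Lemma cyclic_tridiag3_green k : (1 < k)%N ->
  cyclic_tridiag k 3 *m circ k (cyclic_green k root_hi root_lo) = 1%:M.
Proof.
move=> lt1k; rewrite -[in cyclic_tridiag _ _]root_add.
rewrite cyclic_tridiag_green ?root_mul ?root_neq //.
- by rewrite expr_root_hi_neq1 // ltnW.
- by rewrite expr_root_lo_neq1 // ltnW.
Qed.

Lemma wheel_coef_green (n k d : nat) : (0 < k)%N -> (d <= k)%N ->
  1 + n%:R * 2 ^+ (k - d) / s5 *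
    ((3 + s5) ^+ d / (2 ^+ k - (3 + s5) ^+ k)
     - (3 - s5) ^+ d / (2 ^+ k - (3 - s5) ^+ k))
  = 1 - n%:R * cyclic_green k root_hi root_lo d.
Proof.
move=> k_gt0 ledk.
have twice (r : R) : r = 2 * (r / 2) by rewrite mulrC divfK // pnatr_eq0.
rewrite [in LHS](twice (3 + s5)) [in LHS](twice (3 - s5)).
set a := root_hi; set b := root_lo.
transitivity (1 + n%:R / s5 * (2 ^+ (k - d) * (2 * a) ^+ d / (2 ^+ k - (2 * a) ^+ k)
                               - 2 ^+ (k - d) * (2 * b) ^+ d / (2 ^+ k - (2 * b) ^+ k))).
  by ring.
rewrite !expr_scaled_ratio ?pnatr_eq0 ?expr_root_hi_neq1 ?expr_root_lo_neq1 //.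
rewrite /cyclic_green root_sub; field.
rewrite !subr_eq0 ![1 == _]eq_sym expr_root_hi_neq1 ?expr_root_lo_neq1 //.
by rewrite (gt_eqF (lt_trans ltr01 sqrt5_gt1)).
Qed.

End SqrtFive.

Theorem mainTheorem8 (R : rcfType) (n : nat) (hn : (4 <= n)%N) :
  let C : 'M[R]_(n.-1) :=
    circ n.-1 (fun j => if j == 0%N then 1 else if j == (n - 2)%N then -1 else 0) in
  let X : 'M[R]_(n.-1) :=
    invmx (C *m C^T + 1%:M) *m (const_mx 1 - n%:R%:M) in
  let s5 : R := Num.sqrt 5 in
  X = circ n.-1 (fun j =>
        1 + n%:R * 2 ^+ (n.-1 - j) / s5 *
          ((3 + s5) ^+ j / (2 ^+ n.-1 - (3 + s5) ^+ n.-1)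
           - (3 - s5) ^+ j / (2 ^+ n.-1 - (3 - s5) ^+ n.-1))).
Proof.
move=> C X s5; rewrite {}/X {}/C {}/s5.
set k := n.-1; have lt1k : (1 < k)%N by rewrite /k; lia.
have -> : (n - 2)%N = k.-1 by rewrite /k; lia.
rewrite circ_one_sub_shift // one_sub_shift_gram.
have AG := cyclic_tridiag3_green R lt1k.
have AJ : cyclic_tridiag k 3 *m const_mx 1 = const_mx 1 :> 'M[R]_k.
  by rewrite -circ_const cyclic_tridiag_circ; apply: eq_circ => d _; lra.
rewrite (invmx_right AG) mulmxBr mul_mx_scalar (mulmx_right_inverse_fixed AG AJ).
rewrite -circ_const -circZ -circB; apply: eq_circ => d ltdk.
by rewrite wheel_coef_green // ltnW.
Qed.
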